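(* Let $B$ be a real Banach space with norm $|\cdot|$, and $H$ a real Hilbert space that is a dense linear subspace of $B$ such that the inclusion map $H\to B$ is continuous. Then: (i) If $L$ is a closed codimension-one subspace of $B$, then there is a unique closed codimension-one subspace $M$ of $H$ whose closure in $B$ is $L$; namely $M=L\cap H$. (ii) Let $f_0\in H^*$ be nonzero. If $f_0$ is continuous with respect to $|\cdot|$, then the closure of $\ker f_0$ in $B$ is a codimension-one subspace of $B$; if $f_0$ is not continuous with respect to $|\cdot|$, then $\ker f_0$ is dense in $B$.
   Context: Here $H^*$ is the space of continuous linear functionals on $H$ with respect to the Hilbert norm; ''continuous with respect to $|\cdot|$'' means continuous for the restriction to $H$ of the Banach norm of $B$. *)

From HB Require Import structures.
From mathcomp Require Import all_boot all_order all_algebra.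
From mathcomp Require Import all_classical all_reals topology normedtype.
Set Implicit Arguments. Unset Strict Implicit. Unset Printing Implicit Defensive.
Import Order.TTheory GRing.Theory Num.Theory.
Import numFieldNormedType.Exports.
Local Open Scope classical_set_scope.
Local Open Scope ring_scope.

(* Together with completeness of H this makes H a real Hilbert space. *)
Definition inner_product_norm (R : realType) (H : normedModType R)
  (ip : H -> H -> R) : Prop :=
  [/\ (forall x y, ip x y = ip y x),
      (forall a x y z, ip (a *: x + y) z = a * ip x z + ip y z),
      (forall x, 0 <= ip x x) &
      (forall x, `|x| = Num.sqrt (ip x x)) ].

Definition lin_subspace (R : realType) (V : lmodType R) (L : set V) : Prop :=
  L 0 /\ (forall a x y, L x -> L y -> L (a *: x + y)).

Definition codim1 (R : realType) (V : lmodType R) (L : set V) : Prop :=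
  lin_subspace L /\ exists v : V, ~ L v /\ forall x, exists t : R, L (x - t *: v).

Definition closed_codim1 (R : realType) (V : normedModType R) (L : set V) : Prop :=
  closed L /\ codim1 L.

Definition lin_functional (R : realType) (V : lmodType R) (f : V -> R) : Prop :=
  forall a x y, f (a *: x + y) = a * f x + f y.

Definition continuous_wrt (R : realType) (H B : normedModType R)
  (incl : H -> B) (f : H -> R) : Prop :=
  forall x (e : R), 0 < e -> exists2 d : R, 0 < d &
    forall y, `|incl y - incl x| < d -> `|f y - f x| < e.


(* (i) Since L is closed and proper, the dense subspace H is not contained in
   L, so M = L ∩ H has codimension one in H; it is closed because the
   inclusion is continuous.  An l ∈ L is approximated by h ∈ H, and the
   component of h along a fixed h0 ∈ H \ L is small because the distance from
   h0 to L is positive; removing it gives points of M close to l.  Uniqueness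
   holds because a codimension-one subspace is maximal among proper ones.
   (ii) If |f0 h| <= C |h| on H, McShane's construction gives for each x ∈ B a
   number t with |f0 h - t| <= C |x - h| for all h ∈ H; the closure of ker f0
   is exactly the set where t = 0, a hyperplane missing any h1 with f0 h1 = 1.
   If f0 is unbounded, every h ∈ H is the limit of the kernel elements
   h - (f0 h / f0 y) y with |y| small compared to |f0 y|, so ker f0 is dense. *)

From HB Require Import structures.
From mathcomp Require Import all_boot all_order all_algebra.
From mathcomp Require Import all_classical all_reals topology normedtype.
From mathcomp Require Import lra.
Set Implicit Arguments. Unset Strict Implicit. Unset Printing Implicit Defensive.
Import Order.TTheory GRing.Theory Num.Theory.
Import numFieldNormedType.Exports.
Local Open Scope classical_set_scope.
Local Open Scope ring_scope.

Section LinearSubspace.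
Context {R : realType} {V : lmodType R}.
Implicit Types (L M : set V).

Lemma lin_subspaceZ L a x : lin_subspace L -> L x -> L (a *: x).
Proof. by case=> L0 sL Lx; rewrite -[_ *: _]addr0; apply: sL. Qed.

Lemma lin_subspaceD L x y : lin_subspace L -> L x -> L y -> L (x + y).
Proof. by case=> _ sL Lx Ly; rewrite -[x]scale1r; apply: sL. Qed.

Lemma lin_subspaceB L x y : lin_subspace L -> L x -> L y -> L (x - y).
Proof.
move=> sL Lx Ly; apply: lin_subspaceD => //.
by rewrite -scaleN1r; apply: lin_subspaceZ.
Qed.

Lemma codim1_complement L w : codim1 L -> ~ L w ->
  forall x, exists t, L (x - t *: w).
Proof.
move=> [sL [v [_ Lv]]] nLw x.
have [s Lws] := Lv w; have [t Lxt] := Lv x.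
have s_neq0 : s != 0.
  by apply: contra_notN nLw => /eqP s0; rewrite s0 scale0r subr0 in Lws.
exists (t / s).
have -> : x - (t / s) *: w = (x - t *: v) - (t / s) *: (w - s *: v).
  by rewrite scalerBr scalerA divfK // opprB addrA subrK.
by apply: lin_subspaceB => //; apply: lin_subspaceZ.
Qed.

Lemma codim1_maximal M L z : codim1 M -> lin_subspace L -> M `<=` L ->
  ~ L z -> L = M.
Proof.
move=> cM sL ML nLz; apply/seteqP; split => // x Lx.
apply: contrapT => nMx; have [t Mzt] := codim1_complement cM nMx z.
apply: nLz; rewrite -(subrK (t *: x) z).
by apply: lin_subspaceD => //; [apply: ML | apply: lin_subspaceZ].
Qed.

End LinearSubspace.

Section LinearFunctional.
Context {R : realType} {V : lmodType R} (f : V -> R).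
Hypothesis f_lin : lin_functional f.

Lemma lin_functional0 : f 0 = 0.
Proof. by have := f_lin (-1) 0 0; rewrite scaler0 addr0 mulN1r addNr. Qed.

Lemma lin_functionalZ a x : f (a *: x) = a * f x.
Proof. by have := f_lin a x 0; rewrite addr0 lin_functional0 addr0. Qed.

Lemma lin_functionalB x y : f (x - y) = f x - f y.
Proof.
by have := f_lin (-1) y x; rewrite scaleN1r mulN1r addrC [- f y + _]addrC.
Qed.

Lemma lin_subspace_kernel : lin_subspace (f @^-1` [set 0]).
Proof.
split=> [|a x y fx0 fy0]; first exact: lin_functional0.
by rewrite /preimage /= f_lin fx0 fy0 mulr0 addr0.
Qed.

Lemma lin_functional_normalize : f <> (fun=> 0) -> exists h, f h = 1.
Proof.
move=> f_neq0; have [h fh_neq0] : exists h, f h != 0.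
  apply: contrapT => /forallNP f0; apply: f_neq0; apply: funext => h.
  by apply/eqP/negPn/negP; apply: f0.
by exists ((f h)^-1 *: h); rewrite lin_functionalZ mulVf.
Qed.

End LinearFunctional.

Section LinearMap.
Context {R : realType} {U V : lmodType R} (g : {linear U -> V}).

Lemma lin_subspace_preimage (L : set V) :
  lin_subspace L -> lin_subspace (g @^-1` L).
Proof.
case=> L0 sL; split=> [|a x y Lx Ly]; first by rewrite /preimage /= linear0.
by rewrite /preimage /= linearP; apply: sL.
Qed.

Lemma lin_subspace_image (M : set U) :
  lin_subspace M -> lin_subspace (g @` M).
Proof.
case=> M0 sM; split=> [|a _ _ [x Mx <-] [y My <-]].
  by exists 0; rewrite ?linear0.
by exists (a *: x + y); [apply: sM | rewrite linearP].
Qed.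

Lemma codim1_preimage (L : set V) u : codim1 L -> ~ L (g u) ->
  codim1 (g @^-1` L).
Proof.
move=> cL nLgu; split; first by apply: lin_subspace_preimage; case: cL.
exists u; split=> // x; have [t Lt] := codim1_complement cL nLgu (g x).
by exists t; rewrite /preimage /= linearB linearZ.
Qed.

End LinearMap.

Section NormedSpace.
Context {R : realType} {V : normedModType R}.
Implicit Types (A S L : set V).

Lemma closure_normP A x :
  closure A x <-> forall e : R, 0 < e -> exists a, A a /\ `|x - a| < e.
Proof.
split=> [clAx e e0 | approx U /nbhs_ballP [e /= e0 xeU]].
  have [a [Aa]] := clAx _ (nbhsx_ballx x e e0).
  by rewrite -ball_normE /= => xa; exists a.
have [a [Aa xa]] := approx e e0.
by exists a; split => //; apply: xeU; rewrite -ball_normE.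
Qed.

Lemma closure_correct A S x c : closure A x ->
  (forall a, A a -> exists2 b, S b & `|x - b| <= c * `|x - a|) ->
  closure S x.
Proof.
move=> /closure_normP clAx correct; apply/closure_normP => e e0.
have k0 : 0 < `|c| + 1 by rewrite ltr_wpDl.
have [a [Aa xa]] := clAx (e / (`|c| + 1)) (divr_gt0 e0 k0).
have [b Sb xb] := correct a Aa; exists b; split => //.
have : c * `|x - a| <= (`|c| + 1) * `|x - a|.
  by rewrite ler_wpM2r // (le_trans (ler_norm c)) ?lerDl.
have : (`|c| + 1) * `|x - a| < e by rewrite mulrC -ltr_pdivlMr.
lra.
Qed.

Lemma lin_subspace_closure A : lin_subspace A -> lin_subspace (closure A).
Proof.
move=> sA; split=> [|a x y /closure_normP clx /closure_normP cly].
  by apply: subset_closure; case: sA.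
apply/closure_normP => e e0.
have k0 : 0 < `|a| + 1 by rewrite ltr_wpDl.
have e2 : 0 < e / 2 by rewrite divr_gt0.
have [x' [Ax' xx']] := clx (e / 2 / (`|a| + 1)) (divr_gt0 e2 k0).
have [y' [Ay' yy']] := cly (e / 2) e2.
exists (a *: x' + y'); split; first by case: sA => _; apply.
rewrite opprD addrACA -scalerBr.
apply: (le_lt_trans (ler_normD _ _)); rewrite normrZ.
have : `|a| * `|x - x'| <= (`|a| + 1) * `|x - x'| by rewrite ler_wpM2r ?lerDl.
have : (`|a| + 1) * `|x - x'| < e / 2 by rewrite mulrC -ltr_pdivlMr.
lra.
Qed.

Lemma closed_dist_gt0 L w : closed L -> ~ L w ->
  exists2 r : R, 0 < r & forall l, L l -> r <= `|w - l|.
Proof.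
move=> /closure_id cL nLw; apply: contrapT => no_r; apply: nLw; rewrite cL.
apply/closure_normP => e e0; apply: contrapT => no_a; apply: no_r.
exists e => // l Ll; rewrite leNgt; apply/negP => wl.
by apply: no_a; exists l.
Qed.

Lemma lin_subspace_dist_scale L w r : lin_subspace L ->
  (forall l, L l -> r <= `|w - l|) ->
  forall t l, L l -> `|t| * r <= `|t *: w - l|.
Proof.
move=> sL wL t l Ll; have [->|t_neq0] := eqVneq t 0.
  by rewrite normr0 mul0r.
rewrite -[X in t *: w - X](scalerKV t_neq0) -scalerBr normrZ ler_wpM2l //.
by apply: wL; apply: lin_subspaceZ.
Qed.

Lemma lipschitz_extension (T : Type) (i : T -> V) (g : T -> R) C (t0 : T) :
  0 <= C -> (forall s t, g s - g t <= C * `|i s - i t|) ->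
  forall x, exists y, forall t, `|g t - y| <= C * `|x - i t|.
Proof.
move=> C0 gC x.
have sep s t : g s - C * `|x - i s| <= g t + C * `|x - i t|.
  have : C * `|i s - i t| <= C * (`|x - i s| + `|x - i t|).
    by rewrite ler_wpM2l // (distrC x) ler_distD.
  have := gC s t; lra.
pose lower := [set g t - C * `|x - i t| | t in setT].
have lower_sup : has_sup lower.
  split; first by exists (g t0 - C * `|x - i t0|), t0.
  by exists (g t0 + C * `|x - i t0|) => _ [s _ <-]; apply: sep.
exists (sup lower) => t; rewrite ler_distlC; apply/andP; split.
  by apply: sup_upper_bound => //; exists t.
by apply: ge_sup => [|_ [s _ <-]]; [case: lower_sup | apply: sep].
Qed.

End NormedSpace.

Section DenseEmbedding.
Context {R : realType} {B H : normedModType R} (incl : {linear H -> B}).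
Hypothesis incl_dense : closure (range incl) = setT.

Lemma dense_range_notin (L : set B) v : closed L -> ~ L v ->
  exists h, ~ L (incl h).
Proof.
move=> /closure_id cL nLv; apply: contrapT => /forallNP inL; apply: nLv.
have : closure (range incl) v by rewrite incl_dense.
rewrite cL; apply: closureS => _ [h _ <-]; apply: contrapT; exact: inL.
Qed.

Lemma closure_image_preimage (L : set B) : closed_codim1 L ->
  closure (incl @` (incl @^-1` L)) = L.
Proof.
move=> [cL cdL]; have sL : lin_subspace L by case: cdL.
apply/seteqP; split.
  rewrite [X in _ `<=` X]((closure_id L).1 cL).
  exact: closureS (@image_preimage_subset _ _ incl L).
have [h0 nLw] : exists h0, ~ L (incl h0).
  by case: (cdL) => _ [v [nLv _]]; apply: dense_range_notin nLv.
set w := incl h0 in nLw *.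
have [r r0 wL] := closed_dist_gt0 cL nLw.
move=> l Ll; apply: (@closure_correct _ _ (range incl) _ _ (1 + `|w| / r)).
  by rewrite incl_dense.
move=> _ [h _ <-]; have [t Lt] := codim1_complement cdL nLw (incl h).
exists (incl (h - t *: h0)).
  by exists (h - t *: h0) => //; rewrite /preimage /= linearB linearZ.
have tr : `|t| * r <= `|l - incl h|.
  have := lin_subspace_dist_scale sL wL t (lin_subspaceB sL Ll Lt).
  by rewrite opprB addrA [t *: w + _]addrC subrK distrC.
have tw : `|t *: w| <= `|w| / r * `|l - incl h|.
  by rewrite normrZ mulrC -mulrA ler_wpM2l // mulrC ler_pdivlMr.
rewrite linearB linearZ -/w opprB addrCA.
apply: (le_trans (ler_normD _ _)); lra.
Qed.

Lemma codim1_preimage_unique (L : set B) (M : set H) : closed_codim1 L ->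
  codim1 M -> closure (incl @` M) = L -> M = incl @^-1` L.
Proof.
move=> [cL [sL [v [nLv _]]]] cdM clM.
have [h0 nLh0] := dense_range_notin cL nLv.
apply/esym/(codim1_maximal cdM (lin_subspace_preimage incl sL) _ nLh0) => m Mm.
by rewrite /preimage /= -clM; apply: subset_closure; exists m.
Qed.

Lemma continuous_wrtP (f : H -> R) : lin_functional f ->
  continuous_wrt incl f <->
  exists2 C, 0 < C & forall h, `|f h| <= C * `|incl h|.
Proof.
move=> f_lin; split=> [f_cont | [C C0 fC] x e e0].
  have [d d0 fd] := f_cont 0 1 ltr01.
  exists d^-1 => [|h]; first by rewrite invr_gt0.
  rewrite leNgt; apply/negP => fh_big.
  have fh_gt0 : 0 < `|f h|.
    by apply: le_lt_trans fh_big; rewrite mulr_ge0 // invr_ge0 ltW.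
  have fh_neq0 : f h != 0 by rewrite -normr_gt0.
  suff /fd : `|incl ((f h)^-1 *: h) - incl 0| < d.
    by rewrite lin_functional0 // subr0 lin_functionalZ // mulVf // normr1 ltxx.
  rewrite linear0 subr0 linearZ normrZ normrV ?unitfE //.
  by rewrite mulrC ltr_pdivrMr // -ltr_pdivrMl // mulrC.
exists (e / C) => [|y]; first by rewrite divr_gt0.
rewrite -linearB -lin_functionalB // => yx; apply: le_lt_trans (fC _) _.
by rewrite mulrC -ltr_pdivlMr.
Qed.

Section BoundedFunctional.
Variables (f : H -> R) (C : R) (h1 : H).
Hypotheses (f_lin : lin_functional f) (C_gt0 : 0 < C).
Hypotheses (f_bounded : forall h, `|f h| <= C * `|incl h|) (f_h1 : f h1 = 1).

Lemma closure_kernelP z : closure (incl @` (f @^-1` [set 0])) z <->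
  forall h, `|f h| <= C * `|z - incl h|.
Proof.
split=> [clz h | fz].
  apply/ler_addgt0Pr => e e0.
  have [_ [[k /= fk <-] zk]] :=
    (closure_normP _ _).1 clz (e / C) (divr_gt0 e0 C_gt0).
  have : `|f h| <= C * `|incl h - incl k|.
    by rewrite -(subr0 (f h)) -fk -lin_functionalB // -linearB f_bounded.
  have : C * `|incl h - incl k| <= C * `|z - incl h| + C * `|z - incl k|.
    by rewrite -mulrDr ler_wpM2l ?(ltW C_gt0) // (distrC z) (ler_distD z).
  have : C * `|z - incl k| < e by rewrite mulrC -ltr_pdivlMr.
  lra.
apply: (@closure_correct _ _ (range incl) _ _ (1 + C * `|incl h1|)).
  by rewrite incl_dense.
move=> _ [h _ <-]; exists (incl (h - f h *: h1)).
  exists (h - f h *: h1) => //.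
  rewrite /preimage /= lin_functionalB // lin_functionalZ //.
  by rewrite f_h1 mulr1 subrr.
rewrite linearB linearZ opprB addrCA; apply: le_trans (ler_normD _ _) _.
have : `|f h| * `|incl h1| <= C * `|z - incl h| * `|incl h1|.
  by rewrite ler_wpM2r.
rewrite normrZ; lra.
Qed.

Lemma codim1_closure_kernel : codim1 (closure (incl @` (f @^-1` [set 0]))).
Proof.
split; first exact/lin_subspace_closure/lin_subspace_image/lin_subspace_kernel.
exists (incl h1); split.
  move=> /closure_kernelP /(_ h1).
  by rewrite subrr normr0 mulr0 f_h1 normr1 ler10.
move=> x.
have f_lipschitz s t : f s - f t <= C * `|incl s - incl t|.
  by rewrite -lin_functionalB // -linearB (le_trans (ler_norm _)) // f_bounded.
have [t ft] := lipschitz_extension 0 (ltW C_gt0) f_lipschitz x.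
exists t; apply/closure_kernelP => h.
have := ft (t *: h1 + h).
by rewrite f_lin f_h1 mulr1 [t + _]addrC addrK linearP opprD addrA.
Qed.

End BoundedFunctional.

Lemma dense_kernel_unbounded (f : H -> R) : lin_functional f ->
  ~ (exists2 C, 0 < C & forall h, `|f h| <= C * `|incl h|) ->
  closure (incl @` (f @^-1` [set 0])) = setT.
Proof.
move=> f_lin unbounded; set S := incl @` _.
have big C : 0 < C -> exists h, C * `|incl h| < `|f h|.
  move=> C0; apply: contrapT => /forallNP small; apply: unbounded.
  by exists C => // h; rewrite leNgt; apply/negP; apply: small.
have range_sub : range incl `<=` closure S.
  move=> _ [h _ <-]; have [fh0|fh_neq0] := eqVneq (f h) 0.
    by apply: subset_closure; exists h.
  apply/closure_normP => e e0.
  have fh_gt0 : 0 < `|f h| by rewrite normr_gt0.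
  have [y fy_big] := big (`|f h| / e) (divr_gt0 fh_gt0 e0).
  have fy_neq0 : f y != 0.
    rewrite -normr_gt0; apply: le_lt_trans fy_big.
    by rewrite mulr_ge0 // divr_ge0 // ltW.
  exists (incl (h - (f h / f y) *: y)); split.
    exists (h - (f h / f y) *: y) => //.
    by rewrite /preimage /= lin_functionalB // lin_functionalZ // divfK ?subrr.
  rewrite linearB linearZ opprB addrCA subrr addr0.
  rewrite normrZ normrM normrV ?unitfE //.
  rewrite mulrAC ltr_pdivrMr ?normr_gt0 //.
  by move: fy_big; rewrite mulrAC ltr_pdivrMr // [e * _]mulrC.
apply/seteqP; split=> // x _.
rewrite ((closure_id (closure S)).1 (@closed_closure _ S)).
by apply: (closureS range_sub); rewrite incl_dense.
Qed.

End DenseEmbedding.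

Theorem proposition5p3 (R : realType)
  (B : completeNormedModType R)
  (H : completeNormedModType R) (ip : H -> H -> R)
  (incl : {linear H -> B}) :
  inner_product_norm ip ->
  injective incl ->
  continuous incl ->
  closure (range incl) = setT ->
  (* (i) *)
  (forall L : set B, closed_codim1 L ->
     [/\ closed_codim1 (incl @^-1` L),
         closure (incl @` (incl @^-1` L)) = L &
         forall M : set H, closed_codim1 M -> closure (incl @` M) = L ->
           M = incl @^-1` L])
  /\
  (* (ii) *)
  (forall f0 : H -> R, lin_functional f0 -> continuous f0 -> f0 <> (fun=> 0) ->
     (continuous_wrt incl f0 ->
        codim1 (closure (incl @` (f0 @^-1` [set 0]))))
     /\
     (~ continuous_wrt incl f0 ->
        closure (incl @` (f0 @^-1` [set 0])) = setT)).
Proof.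
move=> _ _ incl_cont incl_dense; split.
  move=> L [cL cdL].
  have [v nLv] : exists v, ~ L v by case: cdL => _ [v []]; exists v.
  have [h0 nLh0] := dense_range_notin incl_dense cL nLv.
  split.
  - split; first exact: (proj1 (continuous_closedP incl) incl_cont).
    exact: codim1_preimage cdL nLh0.
  - exact: closure_image_preimage.
  - by move=> M [_ cdM]; apply: codim1_preimage_unique.
move=> f f_lin _ f_neq0; split.
  move=> /(continuous_wrtP _ f_lin) [C C_gt0 f_bounded].
  have [h1 f_h1] := lin_functional_normalize f_lin f_neq0.
  exact: (codim1_closure_kernel incl_dense f_lin C_gt0 f_bounded f_h1).
move=> f_discont; apply: dense_kernel_unbounded => //.
by move=> /(continuous_wrtP _ f_lin).
Qed.
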